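(* Let $\mathcal H$ be the Hilbert space of $n$ qubits. Let $\mathsf H_0=\{|\Psi\rangle\langle\Psi| : |\Psi\rangle=|\phi\rangle\otimes|\psi\rangle,\ |\phi\rangle,|\psi\rangle\in\mathcal H\text{ unit vectors}\}$ and, for $\varepsilon\ge0$, $\mathsf H_1^{\varepsilon}=\{|\Psi\rangle\langle\Psi| : |\Psi\rangle\in\mathcal H^{\otimes2},\ \max_{|\phi\rangle,|\psi\rangle\in\mathcal H}F(|\Psi\rangle\langle\Psi|,|\phi\rangle\langle\phi|\otimes|\psi\rangle\langle\psi|)\le1-\varepsilon\}$. Then for every $0\le\varepsilon\le 1-2^{-n/2}$ and every POVM $\{M_0,M_1\}$ on $\mathcal H^{\otimes2}$, $$\sup_{\rho\in\mathsf H_0}\operatorname{tr}(M_1\rho)+\sup_{\rho\in\mathsf H_1^{\varepsilon}}\operatorname{tr}(M_0\rho)\ \ge\ 1,$$ i.e., no measurement distinguishes $\mathsf H_0$ from $\mathsf H_1^\varepsilon$ better than guessing at random.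
   Context: The fidelity of density operators is $F(\rho,\sigma)=\operatorname{tr}\sqrt{\sqrt\rho\,\sigma\sqrt\rho}$; for pure states $F(|a\rangle\langle a|,|b\rangle\langle b|)=|\langle a|b\rangle|$. A POVM $\{M_0,M_1\}$ is a pair of positive semidefinite operators with $M_0+M_1=I$; outcome $i$ (meaning ''the state is in the $i$th set'') occurs with probability $\operatorname{tr}(M_i\rho)$. *)

From HB Require Import structures.
From mathcomp Require Import all_boot all_order all_algebra.
From mathcomp Require Import classical_sets boolp reals.
From mathcomp Require Import complex mxtens.
Set Implicit Arguments. Unset Strict Implicit. Unset Printing Implicit Defensive.
Import Order.TTheory GRing.Theory Num.Theory.
Local Open Scope ring_scope.
Local Open Scope classical_set_scope.

Section Quantum.
Variable R : realType.
Local Notation C := R[i].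

Definition adj {m n} (A : 'M[C]_(m, n)) : 'M[C]_(n, m) := (map_mx Num.conj A)^T.

Definition inner {d} (a b : 'cV[C]_d) : C := (adj a *m b) 0 0.

Definition unit_vec {d} (v : 'cV[C]_d) : Prop := inner v v = 1.

Definition proj {d} (v : 'cV[C]_d) : 'M[C]_d := v *m adj v.

Definition psd {d} (A : 'M[C]_d) : Prop :=
  adj A = A /\ forall v : 'cV[C]_d, 0 <= inner v (A *m v).

Definition povm {d} (M0 M1 : 'M[C]_d) : Prop :=
  psd M0 /\ psd M1 /\ M0 + M1 = 1%:M.

(* fidelity of pure states: F(|a><a|,|b><b|) = |<a|b>| *)
Definition pure_fidelity {d} (a b : 'cV[C]_d) : R := complex.Re `|inner a b|.

(* probability of outcome M on state rho: tr(M rho) (real part; it is real) *)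
Definition prob {d} (M rho : 'M[C]_d) : R := complex.Re (\tr (M *m rho)).

Definition qdim (n : nat) : nat := 2 ^ n.

Definition H0 (n : nat) : set 'M[C]_(qdim n * qdim n) :=
  [set rho | exists (phi psi : 'cV[C]_(qdim n)),
     unit_vec phi /\ unit_vec psi /\ rho = proj (phi *t psi)].

(* H_1^eps : pure states at fidelity <= 1 - eps from all product states
   (|phi><phi| (x) |psi><psi| = |phi (x) psi><phi (x) psi|) *)
Definition H1 (n : nat) (eps : R) : set 'M[C]_(qdim n * qdim n) :=
  [set rho | exists Psi : 'cV[C]_(qdim n * qdim n),
     unit_vec Psi /\ rho = proj Psi /\
     (forall phi psi : 'cV[C]_(qdim n), unit_vec phi -> unit_vec psi ->
        pure_fidelity Psi (phi *t psi) <= 1 - eps)].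

End Quantum.

From HB Require Import structures.
From mathcomp Require Import all_boot all_order all_algebra.
From mathcomp Require Import classical_sets boolp reals.
From mathcomp Require Import complex mxtens.
From mathcomp Require Import ring lra.
Import Order.TTheory GRing.Theory Num.Theory.
Local Open Scope ring_scope.
Local Open Scope classical_set_scope.

(* For a sign pattern [s], let [Psi_s = d^(-1/2) sum_i s_i |i>|i>]. Its overlap
   with any product state [phi (x) psi] is [d^(-1/2) sum_i s_i phi_i psi_i],
   of modulus at most [d^(-1/2) = 2^(-n/2) <= 1 - eps] by Cauchy-Schwarz, so
   every [|Psi_s><Psi_s|] lies in [H_1^eps]. Averaged over all sign patterns,
   the cross terms cancel and [|Psi_s><Psi_s|] becomes the mixture
   [(1/d) sum_i |ii><ii|] of product states. Hence the average of
   [tr(M_0 |Psi_s><Psi_s|)] equals [1 - (1/d) sum_i tr(M_1 |ii><ii|)], which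
   is at least [1 - sup_{H_0} tr(M_1 rho)], while it is at most
   [sup_{H_1^eps} tr(M_0 rho)]. *)

Section Quantum.
Context {R : realType}.
Local Notation C := R[i].

Lemma innerE d (v w : 'cV[C]_d) : inner v w = \sum_k Num.conj (v k 0) * w k 0.
Proof. by rewrite /inner /adj !mxE; apply: eq_bigr => k _; rewrite !mxE. Qed.

Lemma inner_addr d (v w1 w2 : 'cV[C]_d) :
  inner v (w1 + w2) = inner v w1 + inner v w2.
Proof. by rewrite !innerE -big_split; apply: eq_bigr => k _; rewrite mxE mulrDr. Qed.

Lemma inner_sumr d m (v : 'cV[C]_d) (b : 'I_m -> C) (u : 'I_m -> 'cV[C]_d) :
  inner v (\sum_i b i *: u i) = \sum_i b i * inner v (u i).
Proof.
rewrite innerE; under eq_bigr do rewrite summxE mulr_sumr.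
rewrite exchange_big; apply: eq_bigr => i _; rewrite innerE mulr_sumr.
by apply: eq_bigr => k _; rewrite mxE mulrCA.
Qed.

Lemma inner_suml d m (w : 'cV[C]_d) (a : 'I_m -> C) (u : 'I_m -> 'cV[C]_d) :
  inner (\sum_i a i *: u i) w = \sum_i Num.conj (a i) * inner (u i) w.
Proof.
rewrite innerE; under eq_bigr do rewrite summxE rmorph_sum mulr_suml.
rewrite exchange_big; apply: eq_bigr => i _; rewrite innerE mulr_sumr.
by apply: eq_bigr => k _; rewrite mxE rmorphM mulrA.
Qed.

Lemma inner_delta d (i : 'I_d) (v : 'cV[C]_d) : inner (delta_mx i 0) v = v i 0.
Proof.
rewrite innerE (bigD1 i) //= big1 ?addr0; first by rewrite mxE !eqxx rmorph1 mul1r.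
by move=> k /negbTE ki; rewrite mxE ki rmorph0 mul0r.
Qed.

Lemma inner_tens m p (a c : 'cV[C]_m) (b e : 'cV[C]_p) :
  inner (a *t b) (c *t e) = inner a c * inner b e.
Proof.
have adj_tens : adj (a *t b) = adj a *t adj b.
  by apply/matrixP => i j; rewrite !mxE rmorphM.
rewrite /inner adj_tens.
rewrite -[RHS](tensmxE (adj a *m c) (adj b *m e) ord0 ord0 ord0 ord0) -tensmx_mul.
by congr (_ _ _); apply: val_inj.
Qed.

Lemma prob_proj d (M : 'M[C]_d) v :
  prob M (proj v) = complex.Re (inner v (M *m v)).
Proof. by rewrite /prob /proj mulmxA mxtrace_mulC /mxtrace big_ord1. Qed.

Lemma prob_proj_ge0 d (M : 'M[C]_d) v : psd M -> 0 <= prob M (proj v).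
Proof. by move=> [_ /(_ v)]; rewrite prob_proj lecE => /andP[]. Qed.

Lemma prob_proj_compl {d} {M0 M1 : 'M[C]_d} {v} : M0 + M1 = 1%:M -> unit_vec v ->
  prob M0 (proj v) + prob M1 (proj v) = 1.
Proof.
move=> sumI uv; rewrite !prob_proj -(raddfD (@complex.Re R : Rcomplex R -> R)).
by rewrite -inner_addr -mulmxDl sumI mul1mx uv.
Qed.

Lemma prob_proj_le1 {d} {M0 M1 : 'M[C]_d} {v} : psd M1 -> M0 + M1 = 1%:M ->
  unit_vec v -> prob M0 (proj v) <= 1.
Proof.
move=> psd1 sumI uv; rewrite -(prob_proj_compl sumI uv) lerDl.
exact: prob_proj_ge0.
Qed.

Lemma Re_sum (I : Type) (r : seq I) (P : pred I) (f : I -> C) :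
  complex.Re (\sum_(i <- r | P i) f i) = \sum_(i <- r | P i) complex.Re (f i).
Proof. exact: (raddf_sum (@complex.Re R : Rcomplex R -> R)). Qed.

Lemma Re_realM (k : R) (z : C) : complex.Re ((k%:C)%C * z) = k * complex.Re z.
Proof. by case: z => a b; rewrite /= mul0r subr0. Qed.

Lemma sum_normM_le1 d (phi psi : 'cV[C]_d) : unit_vec phi -> unit_vec psi ->
  \sum_i `|phi i 0| * `|psi i 0| <= 1.
Proof.
have sum_sqr v : unit_vec v -> \sum_i `|v i 0| ^+ 2 = 1 :> C.
  by move=> <-; rewrite innerE; apply: eq_bigr => i _; rewrite normCK mulrC.
move=> uphi upsi.
have amgm i : (`|phi i 0| * `|psi i 0|) *+ 2 <= `|phi i 0| ^+ 2 + `|psi i 0| ^+ 2.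
  rewrite -subr_ge0.
  have -> : `|phi i 0| ^+ 2 + `|psi i 0| ^+ 2 - (`|phi i 0| * `|psi i 0|) *+ 2
     = (`|phi i 0| - `|psi i 0|) ^+ 2 by ring.
  by rewrite real_exprn_even_ge0 // rpredB ?normr_real.
rewrite -(ler_pMn2r (n := 2)) // -sumrMnl.
by rewrite (le_trans (ler_sum _ (fun i _ => amgm i))) // big_split /= !sum_sqr.
Qed.

Definition sg (b : bool) : C := if b then 1 else -1.

Lemma sgK b : sg b * sg b = 1.
Proof. by case: b; rewrite /sg ?mul1r ?mulN1r ?opprK. Qed.

Lemma normr_sg b : `|sg b| = 1.
Proof. by case: b; rewrite /sg ?normrN normr1. Qed.

Lemma conj_real_sg (c : R) b : Num.conj ((c%:C)%C * sg b) = (c%:C)%C * sg b.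
Proof.
apply: conj_Creal; apply: rpredM; first by apply/complex_realP; exists c.
by case: b; rewrite ?rpred1 ?rpredN1.
Qed.

(* Flipping the sign at [i] is an involution of the sign patterns that
   negates every term with [i != k]. *)
Lemma sum_sgM d (i k : 'I_d) :
  \sum_(s : {ffun 'I_d -> bool}) sg (s i) * sg (s k) =
  (i == k)%:R * #|{ffun 'I_d -> bool}|%:R.
Proof.
have [<-|ik] := eqVneq.
  by rewrite mul1r; under eq_bigr do rewrite sgK; rewrite sumr_const.
rewrite mul0r; set S := \sum_ _ _.
pose flip (s : {ffun 'I_d -> bool}) := [ffun j => if j == i then ~~ s j else s j].
have flipK : involutive flip.
  by move=> s; apply/ffunP => j; rewrite !ffunE; case: eqP => // _; rewrite negbK.
have SN : S = - S.
  rewrite {1}/S (reindex_inj (inv_inj flipK)) /S -sumrN.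
  apply: eq_bigr => s _; rewrite !ffunE eqxx eq_sym (negbTE ik).
  by case: (s i); rewrite /sg /= ?mul1r ?mulN1r ?opprK.
have : S *+ 2 == 0 by rewrite mulr2n {1}SN addNr.
by rewrite mulrn_eq0 => /eqP.
Qed.

Section SignedStates.
Context {d : nat}.

Definition diag_ket (i : 'I_d) : 'cV[C]_(d * d) :=
  delta_mx i (0 : 'I_1) *t delta_mx i (0 : 'I_1).

Definition signed_state (c : R) (s : {ffun 'I_d -> bool}) : 'cV[C]_(d * d) :=
  \sum_i ((c%:C)%C * sg (s i)) *: diag_ket i.

Lemma inner_diag_ket (i k : 'I_d) : inner (diag_ket i) (diag_ket k) = (i == k)%:R.
Proof.
rewrite inner_tens !inner_delta mxE eqxx andbT.
by case: (i == k); rewrite ?mul1r ?mul0r.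
Qed.

Lemma diag_ket_unit i : unit_vec (diag_ket i).
Proof. by rewrite /unit_vec inner_diag_ket eqxx. Qed.

Lemma quad_signed_state c s (M : 'M[C]_(d * d)) :
  inner (signed_state c s) (M *m signed_state c s) =
  \sum_i \sum_k ((c%:C)%C ^+ 2 * (sg (s i) * sg (s k))) *
                 inner (diag_ket i) (M *m diag_ket k).
Proof.
rewrite /signed_state mulmx_sumr inner_suml; apply: eq_bigr => i _.
under eq_bigr do rewrite -scalemxAr.
rewrite inner_sumr mulr_sumr conj_real_sg; apply: eq_bigr => k _; ring.
Qed.

Lemma signed_state_unit c s : c ^+ 2 * d%:R = 1 -> unit_vec (signed_state c s).
Proof.
move=> cd; rewrite /unit_vec -{2}[signed_state c s]mul1mx quad_signed_state.
under eq_bigr => i _.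
  rewrite (bigD1 i) //= big1 => [|k ki]; last first.
    by rewrite mul1mx inner_diag_ket eq_sym (negbTE ki) mulr0.
  rewrite mul1mx inner_diag_ket eqxx sgK !mulr1 addr0.
over.
by rewrite sumr_const card_ord -mulr_natr -rmorphXn -(rmorph_nat (real_complex R)) -rmorphM cd.
Qed.

(* The overlap with [phi (x) psi] only sees the diagonal coefficients
   [phi_i psi_i], whose moduli sum to at most [1] by Cauchy-Schwarz. *)
Lemma signed_state_fidelity_le c s (phi psi : 'cV[C]_d) : 0 <= c ->
  unit_vec phi -> unit_vec psi -> pure_fidelity (signed_state c s) (phi *t psi) <= c.
Proof.
move=> c0 uphi upsi; rewrite /pure_fidelity.
have -> : inner (signed_state c s) (phi *t psi) =
          \sum_i (c%:C)%C * sg (s i) * (phi i 0 * psi i 0).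
  rewrite inner_suml; apply: eq_bigr => i _.
  by rewrite conj_real_sg inner_tens !inner_delta.
suff : `|\sum_i (c%:C)%C * sg (s i) * (phi i 0 * psi i 0)| <= (c%:C)%C.
  by rewrite lecE => /andP[].
apply: (le_trans (ler_norm_sum _ _ _)).
have -> : \sum_i `|(c%:C)%C * sg (s i) * (phi i 0 * psi i 0)| =
          (c%:C)%C * \sum_i `|phi i 0| * `|psi i 0|.
  rewrite mulr_sumr; apply: eq_bigr => i _.
  by rewrite !normrM normr_sg mulr1 ger0_norm ?ler0c.
by rewrite -[leRHS]mulr1 ler_wpM2l ?ler0c // sum_normM_le1.
Qed.

Lemma sum_quad_signed_state c (M : 'M[C]_(d * d)) :
  \sum_s inner (signed_state c s) (M *m signed_state c s) =
  (c%:C)%C ^+ 2 * #|{ffun 'I_d -> bool}|%:R *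
    \sum_i inner (diag_ket i) (M *m diag_ket i).
Proof.
under eq_bigr do rewrite quad_signed_state.
rewrite exchange_big mulr_sumr; apply: eq_bigr => i _.
rewrite exchange_big; under eq_bigr do rewrite -mulr_suml -mulr_sumr sum_sgM.
rewrite (bigD1 i) //= big1 => [|k ki]; last by rewrite eq_sym (negbTE ki) !(mul0r, mulr0).
by rewrite eqxx mul1r addr0.
Qed.

Lemma sum_prob_signed_state c (M : 'M[C]_(d * d)) :
  \sum_s prob M (proj (signed_state c s)) =
  c ^+ 2 * #|{ffun 'I_d -> bool}|%:R * \sum_i prob M (proj (diag_ket i)).
Proof.
under eq_bigr do rewrite prob_proj.
rewrite -Re_sum sum_quad_signed_state.
rewrite -(rmorph_nat (real_complex R)) -rmorphXn -rmorphM Re_realM Re_sum.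
by congr (_ * _); apply: eq_bigr => i _; rewrite prob_proj.
Qed.

Lemma signed_average_bound {M0 M1 : 'M[C]_(d * d)} {c b0 b1 : R} :
  c ^+ 2 * d%:R = 1 -> M0 + M1 = 1%:M ->
  (forall i, prob M1 (proj (diag_ket i)) <= b0) ->
  (forall s, prob M0 (proj (signed_state c s)) <= b1) ->
  1 <= b0 + b1.
Proof.
move=> cd sumI le_b0 le_b1.
set N := #|{ffun 'I_d -> bool}|.
have N_gt0 : (0 < N)%N by rewrite /N card_ffun card_bool expn_gt0.
suff : N%:R * (1 - b0) <= N%:R * b1 :> R by rewrite ler_pM2l ?ltr0n //; lra.
have <- : \sum_(s : {ffun 'I_d -> bool}) b1 = N%:R * b1.
  by rewrite sumr_const mulr_natl.
apply: le_trans (ler_sum _ (fun s _ => le_b1 s)).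
have diag_compl i : prob M0 (proj (diag_ket i)) = 1 - prob M1 (proj (diag_ket i)).
  by rewrite -(prob_proj_compl sumI (diag_ket_unit i)) addrK.
rewrite sum_prob_signed_state; under eq_bigr do rewrite diag_compl.
have : \sum_(i < d) (1 - b0) <= \sum_i (1 - prob M1 (proj (diag_ket i))).
  by apply: ler_sum => i _; rewrite lerD2l lerN2.
rewrite sumr_const card_ord => le_sum.
apply: le_trans (ler_wpM2l _ le_sum); last by rewrite mulr_ge0 ?sqr_ge0.
have -> : c ^+ 2 * N%:R * ((1 - b0) *+ d) = (c ^+ 2 * d%:R) * (N%:R * (1 - b0)).
  by rewrite -mulr_natr; ring.
by rewrite cd mul1r.
Qed.

End SignedStates.

Lemma prob_le_sup_pure {d} {A : set 'M[C]_d} {M M' : 'M[C]_d} {v} :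
  psd M' -> M + M' = 1%:M ->
  (forall rho, A rho -> exists2 w, unit_vec w & rho = proj w) ->
  A (proj v) -> prob M (proj v) <= sup [set prob M rho | rho in A].
Proof.
move=> psdM' sumI A_pure Av; apply: ub_le_sup; last by exists (proj v).
exists 1 => _ [_ /A_pure[w uw ->] <-]; exact: prob_proj_le1 psdM' sumI uw.
Qed.

Lemma H0_pure n rho : @H0 R n rho -> exists2 w, unit_vec w & rho = proj w.
Proof.
move=> [phi [psi [uphi [upsi ->]]]]; exists (phi *t psi) => //.
by rewrite /unit_vec inner_tens uphi upsi mulr1.
Qed.

Lemma H1_pure n eps rho : @H1 R n eps rho -> exists2 w, unit_vec w & rho = proj w.
Proof. by move=> [Psi [uPsi [-> _]]]; exists Psi. Qed.

Lemma diag_ket_H0 n (i : 'I_(qdim n)) : @H0 R n (proj (diag_ket i)).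
Proof.
have unit_delta : unit_vec (delta_mx i 0 : 'cV[C]_(qdim n)).
  by rewrite /unit_vec inner_delta mxE !eqxx.
by exists (delta_mx i 0), (delta_mx i 0).
Qed.

Lemma signed_state_H1 n eps c s : 0 <= c -> c ^+ 2 * (qdim n)%:R = 1 ->
  eps <= 1 - c -> @H1 R n eps (proj (signed_state c s)).
Proof.
move=> c_ge0 cd eps_le; exists (signed_state c s).
split; first exact: signed_state_unit.
split=> // phi psi uphi upsi.
by rewrite (le_trans (signed_state_fidelity_le _ s _ _ c_ge0 uphi upsi)) // lerBrDl -lerBrDr.
Qed.

End Quantum.

Lemma sqr_inv_sqrt2X (R : realType) n :
  (Num.sqrt (2 : R) ^+ n)^-1 ^+ 2 * (qdim n)%:R = 1.
Proof.
rewrite /qdim exprVn -exprM mulnC exprM sqr_sqrtr ?ler0n // natrX mulVf //.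
by rewrite expf_neq0 // pnatr_eq0.
Qed.

Theorem corollary6p2 (R : realType) (n : nat) (eps : R)
  (M0 M1 : 'M[R[i]]_(qdim n * qdim n)) :
  0 <= eps -> eps <= 1 - (Num.sqrt (2 : R) ^+ n)^-1 ->
  povm M0 M1 ->
  sup [set prob M1 rho | rho in @H0 R n] +
  sup [set prob M0 rho | rho in @H1 R n eps] >= 1.
Proof.
move=> _ eps_le [psd0 [psd1 sumI]].
set c := (Num.sqrt (2 : R) ^+ n)^-1 in eps_le *.
have c_ge0 : 0 <= c by rewrite invr_ge0 exprn_ge0 ?sqrtr_ge0.
have cd : c ^+ 2 * (qdim n)%:R = 1 := sqr_inv_sqrt2X R n.
apply: (signed_average_bound cd sumI) => [i | s].
  apply: (prob_le_sup_pure psd0); [by rewrite addrC | exact: H0_pure | ].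
  exact: diag_ket_H0.
apply: (prob_le_sup_pure psd1 sumI); first exact: H1_pure.
exact: signed_state_H1.
Qed.
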